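(* Let $T\ge2$ and $N\ge1$ be integers, $\epsilon\in(0,1)$, $\bm\mu\in\mathbb R^N$, $\bm\Sigma=[\sigma_{ij}]\in\mathbb S^N$ with $\bm\Sigma\succ\bm0$, and let $\rho_0=1,\rho_1,\dots,\rho_{T-1}\in\mathbb R$ be such that the symmetric Toeplitz matrix $\mathbf P=[\rho_{|t-s|}]_{s,t=1}^T$ is positive definite. Let $\mathcal P$ be the set of all probability distributions $\mathbb P$ of $(\tilde{\bm r}_1,\dots,\tilde{\bm r}_T)\in\mathbb R^{NT}$ with finite second moments such that $\mathbb E_{\mathbb P}(\tilde r_{t,i})=\mu_i$ and $\mathrm{Cov}_{\mathbb P}(\tilde r_{s,i},\tilde r_{t,j})=\rho_{|t-s|}\sigma_{ij}$ for all $i,j\in\{1,\dots,N\}$, $s,t\in\{1,\dots,T\}$. For $\bm w\in\mathbb R^N_+$ define $$\mathcal G_\epsilon(\bm w)=\sup\Big\{\gamma:\ \mathbb P\Big(\tfrac1T\textstyle\sum_{t=1}^T\big(\bm w^\intercal\tilde{\bm r}_t-\tfrac12(\bm w^\intercal\tilde{\bm r}_t)^2\big)\ge\gamma\Big)\ge1-\epsilon\ \forall\mathbb P\in\mathcal P\Big\}.$$ Let $\bar\rho=\frac{2}{T(T-1)}\sum_{t=1}^{T-1}(T-t)\rho_t$ and define $$\mathcal G'_\epsilon(\bm w)=\frac12\left(1-\left(1-\bm w^\intercal\bm\mu+\sqrt{\frac{(1-\epsilon)(1+(T-1)\bar\rho)}{\epsilon T}}\,\|\bm\Sigma^{1/2}\bm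 w\|\right)^2-\frac{T-1-(T-1)\bar\rho}{\epsilon T}\,\bm w^\intercal\bm\Sigma\bm w\right).$$ If $\bm w\in\mathbb R^N_+$ satisfies $1-\bm w^\intercal\bm\mu>\sqrt{\frac{(1+(T-1)\bar\rho)\epsilon}{(1-\epsilon)T}}\,\|\bm\Sigma^{1/2}\bm w\|$, then $\mathcal G_\epsilon(\bm w)\ge\mathcal G'_\epsilon(\bm w)$.
   Context: $\mathbb S^N$ is the set of real symmetric $N\times N$ matrices; $\bm\Sigma^{1/2}$ is the principal square root; $\|\cdot\|$ is the Euclidean norm. The quantity $\mathcal G'_\epsilon(\bm w)$ is the worst-case growth rate that would be obtained if all autocorrelations $\rho_1,\dots,\rho_{T-1}$ were replaced by the single value $\bar\rho$. *)

From HB Require Import structures.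
From mathcomp Require Import all_boot all_order all_algebra.
From mathcomp Require Import all_classical all_reals all_analysis.
Set Implicit Arguments. Unset Strict Implicit. Unset Printing Implicit Defensive.
Import Order.TTheory GRing.Theory Num.Theory.
Local Open Scope classical_set_scope.
Local Open Scope ring_scope.

Definition absdiff (s t : nat) : nat := (maxn s t - minn s t)%N.

Definition qform (R : realType) (n : nat) (A : 'M[R]_n) (v : 'cV[R]_n) : R :=
  (v^T *m A *m v) 0 0.

Definition posdef (R : realType) (n : nat) (A : 'M[R]_n) : Prop :=
  A^T = A /\ forall v : 'cV[R]_n, v != 0 -> 0 < qform A v.

(* ||Sigma^{1/2} w|| = sqrt (w^T Sigma w) *)
Definition sqrt_norm (R : realType) (n : nat) (S : 'M[R]_n) (w : 'cV[R]_n) : R :=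
  Num.sqrt (qform S w).

Definition toeplitz (R : realType) (T : nat) (rho : nat -> R) : 'M[R]_T :=
  \matrix_(s < T, t < T) rho (absdiff s t).

Definition dotv (R : realType) (n : nat) (w x : 'cV[R]_n) : R := (w^T *m x) 0 0.

Definition avg_growth (R : realType) (T N : nat) (Om : Type)
    (w : 'cV[R]_N) (r : 'I_T -> 'I_N -> Om -> R) (x : Om) : R :=
  T%:R^-1 * \sum_(t < T)
    (let g := \sum_(i < N) w i 0 * r t i x in g - g ^+ 2 / 2).

(* gamma is a guaranteed level: for every distribution in the ambiguity set
   (realized as the joint law of a family of real random variables r_{t,i}
   with finite second moments on some probability space),
   P(avg_growth >= gamma) >= 1 - eps. *)
Definition feasible_level (R : realType) (T N : nat) (eps : R)
    (mu : 'cV[R]_N) (Sig : 'M[R]_N) (rho : nat -> R) (w : 'cV[R]_N)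
    (gamma : R) : Prop :=
  forall (d : measure_display) (Om : measurableType d) (P : probability Om R)
         (r : 'I_T -> 'I_N -> Om -> R),
    (forall t i, r t i \in Lfun P 2%:E) ->
    (forall t i, ('E_P[r t i] = (mu i 0)%:E)%E) ->
    (forall s t i j, covariance P (r s i) (r t j) =
                     (rho (absdiff s t) * Sig i j)%:E) ->
    ((1 - eps)%:E <= P [set x | (gamma <= avg_growth w r x)%R])%E.

Definition G_eps (R : realType) (T N : nat) (eps : R)
    (mu : 'cV[R]_N) (Sig : 'M[R]_N) (rho : nat -> R) (w : 'cV[R]_N) : \bar R :=
  ereal_sup [set g%:E | g in [set g | feasible_level T eps mu Sig rho w g]].

Definition rho_bar (R : realType) (T : nat) (rho : nat -> R) : R :=
  2 / (T%:R * (T%:R - 1)) * \sum_(1 <= t < T) ((T - t)%:R * rho t).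

Definition G'_eps (R : realType) (T N : nat) (eps : R)
    (mu : 'cV[R]_N) (Sig : 'M[R]_N) (rho : nat -> R) (w : 'cV[R]_N) : R :=
  let rb := rho_bar T rho in
  (1 - (1 - dotv w mu
         + Num.sqrt ((1 - eps) * (1 + (T%:R - 1) * rb) / (eps * T%:R))
           * sqrt_norm Sig w) ^+ 2
     - (T%:R - 1 - (T%:R - 1) * rb) / (eps * T%:R) * qform Sig w) / 2.

(* Write y_t = 1 - w^T r_t.  Since g - g^2/2 = (1 - (1 - g)^2)/2, the average
   growth equals (1 - M)/2, where M is the mean of the y_t^2, and the mean Y of
   the y_t satisfies Y^2 <= M.  The ambiguity set fixes E Y = 1 - w^T mu,
   Var Y = kappa q / T and E M - E Y^2 = q - kappa q / T, with q = w^T Sigma w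
   and T kappa = T (1 + (T - 1) rho_bar) the sum of the Toeplitz matrix.  For
   any such (Y, M), Markov's inequality applied to a nonnegative quadratic
   certificate in (Y, M) yields a Cantelli-type bound
   P(M <= 1 - 2 G'_eps(w)) >= 1 - eps, which is the claim. *)

From HB Require Import structures.
From mathcomp Require Import all_boot all_order all_algebra.
From mathcomp Require Import all_classical all_reals all_analysis.
From mathcomp Require Import measurable_realfun ring lra.
Set Implicit Arguments.
Unset Strict Implicit.
Unset Printing Implicit Defensive.
Import Order.TTheory GRing.Theory Num.Theory.
Local Open Scope classical_set_scope.
Local Open Scope ring_scope.

Lemma dotvE (R : realType) n (w x : 'cV[R]_n) :
  dotv w x = \sum_i w i 0 * x i 0.
Proof. by rewrite /dotv mxE; apply: eq_bigr => i _; rewrite mxE. Qed.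

Lemma qformE (R : realType) n (A : 'M[R]_n) (v : 'cV[R]_n) :
  qform A v = \sum_i \sum_j v i 0 * v j 0 * A i j.
Proof.
rewrite /qform mxE exchange_big /=; apply: eq_bigr => j _.
rewrite mxE big_distrl /=; apply: eq_bigr => i _; rewrite !mxE; ring.
Qed.

Lemma absdiffC s t : absdiff s t = absdiff t s.
Proof. by rewrite /absdiff maxnC minnC. Qed.

Lemma absdiffE s t : (s <= t)%N -> absdiff s t = (t - s)%N.
Proof. by move=> st; rewrite /absdiff (maxn_idPr st) (minn_idPl st). Qed.

Lemma sum_rev_nat (R : realType) (f : nat -> R) n :
  \sum_(s < n) f (n - s)%N = \sum_(1 <= k < n.+1) f k.
Proof.
elim: n => [|n IH]; first by rewrite big_ord0 big_geq.
rewrite big_ord_recl subn0 big_nat_recr //= addrC -IH.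
by congr (_ + _); apply: eq_bigr => s _; rewrite /bump add1n subSS.
Qed.

Lemma sum_absdiff (R : realType) (rho : nat -> R) n :
  \sum_(s < n) \sum_(t < n) rho (absdiff s t) =
  n%:R * rho 0%N + 2 * \sum_(1 <= k < n) (n - k)%:R * rho k.
Proof.
elim: n => [|n IH]; first by rewrite big_ord0 big_geq // mulr0 mul0r addr0.
have edge : \sum_(s < n) rho (absdiff s n) = \sum_(1 <= k < n.+1) rho k.
  by rewrite -sum_rev_nat; apply: eq_bigr => s _; rewrite absdiffE // ltnW.
have weights : \sum_(1 <= k < n.+1) (n.+1 - k)%:R * rho k =
    \sum_(1 <= k < n) (n - k)%:R * rho k + \sum_(1 <= k < n.+1) rho k.
  case: n {IH edge} => [|n]; first by rewrite !big_geq // addr0.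
  rewrite big_nat_recr //= [X in _ = _ + X]big_nat_recr //= subSn // subnn.
  rewrite mul1r addrA; congr (_ + _); rewrite -big_split /=.
  apply: eq_big_nat => k /andP[_ kn].
  by rewrite subSn 1?ltnW // -addn1 natrD mulrDl mul1r.
have edge' : \sum_(t < n) rho (absdiff n t) = \sum_(1 <= k < n.+1) rho k.
  by rewrite -edge; apply: eq_bigr => t _; rewrite absdiffC.
rewrite big_ord_recr /=; under eq_bigr do rewrite big_ord_recr /=.
rewrite big_split /= IH big_ord_recr /= edge edge' weights.
rewrite /absdiff maxnn minnn subnn -[n.+1]addn1 natrD; ring.
Qed.

Lemma sum_absdiff_rho_bar (R : realType) (rho : nat -> R) n :
  \sum_(s < n) \sum_(t < n) rho (absdiff s t) =
  n%:R * rho 0%N + n%:R * (n%:R - 1) * rho_bar n rho.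
Proof.
rewrite sum_absdiff /rho_bar; case: n => [|[|n]]; try by rewrite big_geq //; ring.
have n0 : 0 <= n%:R :> R by exact: ler0n.
by field; apply/andP; split; rewrite gt_eqF //; lra.
Qed.

Lemma qform_toeplitz_const1 (R : realType) n (rho : nat -> R) :
  qform (toeplitz n rho) (const_mx 1) = \sum_(s < n) \sum_(t < n) rho (absdiff s t).
Proof.
by rewrite qformE; apply: eq_bigr => s _; apply: eq_bigr => t _; rewrite !mxE !mul1r.
Qed.

Lemma sum_absdiff_gt0 (R : realType) n (rho : nat -> R) :
  (0 < n)%N -> posdef (toeplitz n rho) -> 0 < \sum_(s < n) \sum_(t < n) rho (absdiff s t).
Proof.
move=> n0 [_ toep_pd]; rewrite -qform_toeplitz_const1; apply: toep_pd.
by apply/eqP => /matrixP /(_ (Ordinal n0) 0); rewrite !mxE => /eqP; rewrite oner_eq0.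
Qed.

Lemma sqr_avg_le (R : realFieldType) n (y : 'I_n -> R) :
  (n%:R^-1 * \sum_i y i) ^+ 2 <= n%:R^-1 * \sum_i y i ^+ 2.
Proof.
case: n y => [|n] y; first by rewrite !big_ord0 !mulr0 expr0n.
set c := _ * _; have n0 : n.+1%:R != 0 :> R by rewrite pnatr_eq0.
have sum_y : \sum_i y i = n.+1%:R * c by rewrite /c mulrA mulfV // mul1r.
have spread : \sum_i (y i - c) ^+ 2 = \sum_i y i ^+ 2 - n.+1%:R * c ^+ 2.
  transitivity (\sum_i (y i ^+ 2 - (2 * c) * y i + c ^+ 2)).
    by apply: eq_bigr => i _; ring.
  rewrite !big_split /= sumrN -mulr_sumr sum_y sumr_const card_ord -mulr_natl; ring.
rewrite -subr_ge0 -(pmulr_rge0 _ (ltr0Sn R n)) mulrBr mulrA mulfV // mul1r.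
by rewrite -spread sumr_ge0 // => i _; exact: sqr_ge0.
Qed.

Lemma quadratic_certificate_ge (R : realFieldType) (u b y z c : R) :
  0 < u -> 0 <= b <= u -> u ^+ 2 + c <= z ->
  (u - b) ^+ 2 + (u - b) / u * c <= (y - b) ^+ 2 + (u - b) / u * (z - y ^+ 2).
Proof.
move=> u0 /andP[b0 bu] uz; set mu := (u - b) / u.
have mu0 : 0 <= mu by rewrite divr_ge0 ?subr_ge0 // ltW.
have gap : (y - b) ^+ 2 + mu * (u ^+ 2 - y ^+ 2) - (u - b) ^+ 2 = b / u * (y - u) ^+ 2.
  by rewrite /mu; field; rewrite gt_eqF.
have : 0 <= b / u * (y - u) ^+ 2 by rewrite mulr_ge0 ?divr_ge0 ?sqr_ge0 // ltW.
have : mu * (u ^+ 2 + c - y ^+ 2) <= mu * (z - y ^+ 2) by rewrite ler_wpM2l // lerD2r.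
lra.
Qed.

Lemma sqrt_odds_radii (R : rcfType) (eps v : R) : 0 < eps < 1 -> 0 < v ->
  let e := Num.sqrt (eps * v / (1 - eps)) in let k := Num.sqrt ((1 - eps) * v / eps) in
  [/\ 0 < e, 0 < k, e * k = v & eps * (k + e) ^+ 2 = e ^+ 2 + v].
Proof.
move=> /andP[eps0 eps1] v0 e k; have eps1' : 0 < 1 - eps by rewrite subr_gt0.
have e0 : 0 < e by rewrite sqrtr_gt0 divr_gt0 ?mulr_gt0.
have k0 : 0 < k by rewrite sqrtr_gt0 divr_gt0 ?mulr_gt0.
have ek : e * k = v.
  rewrite -sqrtrM ?divr_ge0 ?mulr_ge0 ?ltW // (_ : _ * _ = v ^+ 2).
    by rewrite sqrtr_sqr gtr0_norm.
  by field; rewrite !gt_eqF.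
have kk : k ^+ 2 = (1 - eps) * v / eps by rewrite sqr_sqrtr // divr_ge0 ?mulr_ge0 ?ltW.
have epsk : eps * k = (1 - eps) * e.
  apply: (mulIf (lt0r_neq0 k0)); rewrite -mulrA -expr2 kk -[RHS]mulrA ek.
  by field; rewrite gt_eqF.
split => //; rewrite -ek expr2 mulrA [eps * _]mulrDr epsk; ring.
Qed.

Section real_mean.
Context d (Om : measurableType d) (R : realType) (P : probability Om R).

(* Only meaningful for integrable [X]: [fine] sends infinite expectations to 0. *)
Definition mean (X : Om -> R) : R := fine 'E_P[X].

Lemma EFin_mean X : X \in Lfun P 1 -> 'E_P[X]%E = (mean X)%:E.
Proof. by move=> X1; rewrite fineK ?expectation_fin_num. Qed.

Lemma Lfun1_scale k X : X \in Lfun P 1 -> k \o* X \in Lfun P 1.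
Proof. exact: Lfun_scale. Qed.

Lemma Lfun1_cst c : cst c \in Lfun P 1.
Proof. exact: Lfun_cst. Qed.

Lemma mean_cst c : mean (cst c) = c.
Proof. by rewrite /mean expectation_cst. Qed.

Lemma meanD X Y : X \in Lfun P 1 -> Y \in Lfun P 1 -> mean (X + Y) = mean X + mean Y.
Proof. by move=> X1 Y1; rewrite /mean expectationD // fineD // expectation_fin_num. Qed.

Lemma meanB X Y : X \in Lfun P 1 -> Y \in Lfun P 1 -> mean (X - Y) = mean X - mean Y.
Proof. by move=> X1 Y1; rewrite /mean expectationB // fineB // expectation_fin_num. Qed.

Lemma meanZ k X : X \in Lfun P 1 -> mean (k \o* X) = k * mean X.
Proof. by move=> X1; rewrite /mean expectationZl // fineM // expectation_fin_num. Qed.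

Lemma mean_sum n (F : 'I_n -> Om -> R) : (forall i, F i \in Lfun P 1) ->
  mean (\sum_(i < n) F i) = \sum_(i < n) mean (F i).
Proof.
elim: n F => [|n IH] F F1; first by rewrite !big_ord0; exact: mean_cst.
by rewrite !big_ord_recr /= meanD ?IH ?rpred_sum.
Qed.

Lemma mean_ge0 X : (forall x, 0 <= X x) -> 0 <= mean X.
Proof. by move=> X0; apply: fine_ge0; exact: expectation_ge0. Qed.

Lemma probability_le_mean (A : set Om) (h : Om -> R) : measurable A ->
  h \in Lfun P 1 -> (forall x, 0 <= h x) -> (forall x, A x -> 1 <= h x) ->
  (P A <= (mean h)%:E)%E.
Proof.
move=> mA h1 h0 hA; rewrite -expectation_indic // -EFin_mean //.
apply: expectation_le => //.
  by move: h1 => /sub_Lfun_mfun; rewrite inE.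
apply: aeW => x; rewrite indicE; have [/set_mem/hA //|_] := boolP (x \in A).
exact: h0.
Qed.

Lemma markov_setC (A : set Om) (h : Om -> R) (D eps : R) : measurable A ->
  h \in Lfun P 1 -> (forall x, 0 <= h x) -> 0 < D ->
  (forall x, ~ A x -> D <= h x) -> mean h <= eps * D ->
  ((1 - eps)%:E <= P A)%E.
Proof.
move=> mA h1 h0 D0 hA Eh.
have : (P (~` A) <= eps%:E)%E.
  apply: le_trans (probability_le_mean (measurableC mA) _ _ _) _.
  - exact: (Lfun1_scale D^-1 h1).
  - by move=> x /=; rewrite mulr_ge0 ?h0 ?invr_ge0 ?ltW.
  - by move=> x /hA hx /=; rewrite ler_pdivlMr // mul1r.
  by rewrite meanZ // lee_fin ler_pdivrMl // mulrC.
rewrite probability_setC //; case: (P A) => [p||] //=; last by rewrite leey.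
by rewrite -EFinD !lee_fin; lra.
Qed.

Lemma moment_tail_bound (Y M : Om -> R) (a v s eps : R) :
  Y \in Lfun P 1 -> Y ^+ 2 \in Lfun P 1 -> M \in Lfun P 1 ->
  (forall x, Y x ^+ 2 <= M x) ->
  mean Y = a -> mean (Y ^+ 2) = a ^+ 2 + v -> mean M = a ^+ 2 + v + s ->
  0 < v -> 0 < eps < 1 -> Num.sqrt (eps * v / (1 - eps)) < a ->
  ((1 - eps)%:E <=
    P [set x | (M x <= (a + Num.sqrt ((1 - eps) * v / eps)) ^+ 2 + s / eps)%R])%E.
Proof.
move=> Y1 Y21 M1 YM EY EY2 EM v0 eps01 ea; have [eps0 eps1] := andP eps01.
have [e0 k0 ek key] := sqrt_odds_radii eps01 v0.
set e := Num.sqrt (eps * v / _) in ea e0 ek key *.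
set k := Num.sqrt ((1 - eps) * v / _) in k0 ek key *.
have c0 : 0 <= s / eps.
  have : 0 <= mean (M - Y ^+ 2) by apply: mean_ge0 => x /=; rewrite subr_ge0 YM.
  by rewrite meanB // EM EY2 addrAC subrr add0r => s0; rewrite divr_ge0 // ltW.
set u := a + k; set b := a - e; set c := s / eps in c0 *.
have ub : u - b = k + e by rewrite /u /b; ring.
have u0 : 0 < u by rewrite /u; lra.
pose mu := (u - b) / u; pose D := (u - b) ^+ 2 + mu * c.
have mu0 : 0 <= mu by rewrite /mu ub divr_ge0 // ltW // addr_gt0.
have D0 : 0 < D.
  by rewrite /D ub; apply: ltr_wpDr; [exact: mulr_ge0 | exact/exprn_gt0/addr_gt0].
(* Markov's inequality for the certificate h = (Y - b)^2 + mu (M - Y^2) >= 0: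
   u, b and mu are chosen so that h >= D off the event while E h = eps D. *)
pose h := (1 - mu) \o* Y ^+ 2 + (- (2 * b)) \o* Y + cst (b ^+ 2) + mu \o* M.
have hE x : h x = (Y x - b) ^+ 2 + mu * (M x - Y x ^+ 2) by rewrite /h !fctE /=; ring.
have h0 x : 0 <= h x.
  by rewrite hE; apply: addr_ge0; [exact: sqr_ge0 | rewrite mulr_ge0 ?subr_ge0].
have h1 : h \in Lfun P 1 by rewrite !rpredD ?rpredN ?Lfun1_scale ?Lfun1_cst.
have Eh : mean h = eps * D.
  have epsc : eps * c = s by rewrite /c mulrCA mulfV ?gt_eqF ?mulr1.
  rewrite /h !meanD ?meanZ ?mean_cst ?EY ?EY2 ?EM ?rpredD ?Lfun1_scale ?Lfun1_cst //.
  by rewrite /D ub [RHS]mulrDr key mulrCA epsc /b; ring.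
apply: (markov_setC _ h1 h0 D0); last by rewrite Eh.
  rewrite -[X in measurable X]setTI; apply: measurable_fun_le => //.
  by move: M1 => /sub_Lfun_mfun; rewrite inE.
move=> x /negP; rewrite -ltNge => /ltW Mx; rewrite hE.
by apply: quadratic_certificate_ge => //; rewrite /b /u; apply/andP; split; lra.
Qed.

End real_mean.

Lemma avg_growth_w0 (R : realType) T N (Om : Type) (r : 'I_T -> 'I_N -> Om -> R) x :
  avg_growth 0 r x = 0.
Proof.
rewrite /avg_growth big1 ?mulr0 // => t _.
by rewrite big1 => [|i _]; rewrite ?mxE ?mul0r //= expr0n /= mul0r subr0.
Qed.

Lemma G'_eps_w0 (R : realType) T N (eps : R) mu Sig rho :
  G'_eps T eps mu Sig rho (0 : 'cV_N) = 0.
Proof.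
have q0 : qform Sig 0 = 0 by rewrite /qform trmx0 !mul0mx mxE.
have m0 : dotv 0 mu = 0 by rewrite /dotv trmx0 mul0mx mxE.
by rewrite /G'_eps /sqrt_norm q0 m0 sqrtr0 !(mulr0, subr0, addr0, expr1n, subrr, mul0r).
Qed.

Section G'_eps_parameters.
Variables (R : realType) (T N : nat) (eps : R) (mu w : 'cV[R]_N) (Sig : 'M[R]_N).
Variable rho : nat -> R.
Hypotheses (T0 : (0 < T)%N) (eps01 : 0 < eps < 1).
Let kappa := 1 + (T%:R - 1) * rho_bar T rho.
Hypothesis kappa0 : 0 <= kappa.
Let v := kappa * qform Sig w / T%:R.

Lemma G'_epsE :
  G'_eps T eps mu Sig rho w =
  (1 - ((1 - dotv w mu + Num.sqrt ((1 - eps) * v / eps)) ^+ 2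
        + (qform Sig w - v) / eps)) / 2.
Proof.
have [eps0 eps1] := andP eps01; have Tn0 : T%:R != 0 :> R by rewrite pnatr_eq0 -lt0n.
have scale : Num.sqrt ((1 - eps) * kappa / (eps * T%:R)) * sqrt_norm Sig w =
    Num.sqrt ((1 - eps) * v / eps).
  rewrite -sqrtrM; last by apply: divr_ge0; apply: mulr_ge0; rewrite ?ler0n //; lra.
  by apply: congr1; rewrite /v; field; rewrite Tn0 gt_eqF.
rewrite /G'_eps /= -/kappa scale [in RHS]opprD addrA; congr ((1 - _ - _) / 2).
by rewrite /v /kappa; field; rewrite Tn0 gt_eqF.
Qed.

Lemma scaled_sqrt_normE :
  Num.sqrt (kappa * eps / ((1 - eps) * T%:R)) * sqrt_norm Sig w =
  Num.sqrt (eps * v / (1 - eps)).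
Proof.
have [eps0 eps1] := andP eps01; have Tn0 : T%:R != 0 :> R by rewrite pnatr_eq0 -lt0n.
rewrite -sqrtrM; last by apply: divr_ge0; apply: mulr_ge0; rewrite ?ler0n //; lra.
by apply: congr1; rewrite /v; field; rewrite Tn0 !gt_eqF ?subr_gt0.
Qed.

End G'_eps_parameters.

Section portfolio.
Context d (Om : measurableType d) (R : realType) (P : probability Om R).
Context (T N : nat) (w mu : 'cV[R]_N) (Sig : 'M[R]_N) (rho : nat -> R).
Context (r : 'I_T -> 'I_N -> Om -> R).
Hypothesis r_L2 : forall t i, r t i \in Lfun P 2%:E.
Hypothesis r_mean : forall t i, 'E_P[r t i]%E = (mu i 0)%:E.
Hypothesis r_cov : forall s t i j,
  covariance P (r s i) (r t j) = (rho (absdiff s t) * Sig i j)%:E.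

Definition port_return t : Om -> R := \sum_(i < N) w i 0 \o* r t i.
Definition shortfall t : Om -> R := 1 - port_return t.
Definition avg_shortfall : Om -> R := T%:R^-1 \o* \sum_(t < T) shortfall t.
Definition avg_sqr_shortfall : Om -> R := T%:R^-1 \o* \sum_(t < T) shortfall t ^+ 2.

Let r_L1 t i : r t i \in Lfun P 1.
Proof. by apply: Lfun_subset12 (r_L2 t i); exact: fin_num_measure. Qed.

Let rr_L1 s t i j : r s i * r t j \in Lfun P 1.
Proof. exact: Lfun2_mul_Lfun1. Qed.

Lemma mean_r_mul s t i j :
  mean P (r s i * r t j) = mu i 0 * mu j 0 + rho (absdiff s t) * Sig i j.
Proof.
have := covarianceE (r_L1 s i) (r_L1 t j) (rr_L1 s t i j).
rewrite r_cov !r_mean EFin_mean // -EFinM -EFinB => -[->]; ring.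
Qed.

Lemma port_return_L1 t : port_return t \in Lfun P 1.
Proof. by apply: rpred_sum => i _; exact: Lfun1_scale. Qed.

Lemma mean_port_return t : mean P (port_return t) = dotv w mu.
Proof.
rewrite mean_sum => [|i]; last exact: Lfun1_scale.
by rewrite dotvE; apply: eq_bigr => i _; rewrite meanZ // /mean r_mean.
Qed.

Lemma port_return_mulE s t : port_return s * port_return t =
  \sum_(i < N) \sum_(j < N) (w i 0 * w j 0) \o* (r s i * r t j).
Proof.
apply/funext => x; rewrite /port_return !fct_sumE !fctE /= big_distrlr /=.
by apply: eq_bigr => i _; rewrite fct_sumE; apply: eq_bigr => j _; rewrite !fctE /=; ring.
Qed.

Lemma port_return_mul_L1 s t : port_return s * port_return t \in Lfun P 1.
Proof.
by rewrite port_return_mulE; apply: rpred_sum => i _; apply: rpred_sum => j _;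
  exact: Lfun1_scale.
Qed.

Lemma mean_port_return_mul s t : mean P (port_return s * port_return t) =
  dotv w mu ^+ 2 + rho (absdiff s t) * qform Sig w.
Proof.
rewrite port_return_mulE mean_sum => [|i]; last first.
  by apply: rpred_sum => j _; exact: Lfun1_scale.
rewrite dotvE qformE expr2 big_distrlr mulr_sumr -big_split /=.
apply: eq_bigr => i _; rewrite mean_sum => [|j]; last exact: Lfun1_scale.
rewrite mulr_sumr -big_split /=; apply: eq_bigr => j _.
by rewrite meanZ // mean_r_mul; ring.
Qed.

Lemma shortfall_mulE s t : shortfall s * shortfall t =
  1 - port_return s - port_return t + port_return s * port_return t.
Proof. by rewrite /shortfall; ring. Qed.

Lemma shortfall_L1 t : shortfall t \in Lfun P 1.
Proof. by rewrite rpredB ?port_return_L1 //; exact: Lfun1_cst. Qed.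

Lemma shortfall_mul_L1 s t : shortfall s * shortfall t \in Lfun P 1.
Proof.
by rewrite shortfall_mulE !rpredD ?rpredN ?port_return_L1 ?port_return_mul_L1 //;
  exact: Lfun1_cst.
Qed.

Lemma mean_shortfall t : mean P (shortfall t) = 1 - dotv w mu.
Proof. by rewrite meanB ?port_return_L1 ?Lfun1_cst // mean_port_return (mean_cst P 1). Qed.

Lemma mean_shortfall_mul s t : mean P (shortfall s * shortfall t) =
  (1 - dotv w mu) ^+ 2 + rho (absdiff s t) * qform Sig w.
Proof.
rewrite shortfall_mulE meanD ?meanB ?(mean_cst P 1) ?mean_port_return ?mean_port_return_mul;
  rewrite ?rpredD ?rpredN ?port_return_L1 ?port_return_mul_L1 ?Lfun1_cst //.
ring.
Qed.

Lemma avg_shortfall_L1 : avg_shortfall \in Lfun P 1.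
Proof. by apply/Lfun1_scale/rpred_sum => t _; exact: shortfall_L1. Qed.

Lemma avg_sqr_shortfall_L1 : avg_sqr_shortfall \in Lfun P 1.
Proof. by apply/Lfun1_scale/rpred_sum => t _; rewrite expr2 shortfall_mul_L1. Qed.

Lemma sqr_avg_shortfallE : avg_shortfall ^+ 2 =
  (T%:R ^+ 2)^-1 \o* \sum_(s < T) \sum_(t < T) shortfall s * shortfall t.
Proof.
apply/funext => x; rewrite /avg_shortfall !fctE !fct_sumE /= expr_div_n.
congr (_ / _); rewrite expr2 big_distrlr /=.
by apply: eq_bigr => s _; rewrite fct_sumE; apply: eq_bigr => t _; rewrite fctE.
Qed.

Lemma sqr_avg_shortfall_L1 : avg_shortfall ^+ 2 \in Lfun P 1.
Proof.
rewrite sqr_avg_shortfallE; apply/Lfun1_scale/rpred_sum => s _.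
by apply: rpred_sum => t _; exact: shortfall_mul_L1.
Qed.

Lemma sqr_avg_shortfall_le x : avg_shortfall x ^+ 2 <= avg_sqr_shortfall x.
Proof.
rewrite /avg_shortfall /avg_sqr_shortfall /= !fct_sumE /=.
under [X in _ <= X / _]eq_bigr do rewrite exprfctE.
by rewrite !(mulrC _ T%:R^-1); exact: sqr_avg_le.
Qed.

Lemma mean_avg_shortfall (T0 : (0 < T)%N) : mean P avg_shortfall = 1 - dotv w mu.
Proof.
rewrite meanZ ?rpred_sum // => [|t _]; last exact: shortfall_L1.
rewrite mean_sum => [|t]; last exact: shortfall_L1.
under eq_bigr do rewrite mean_shortfall.
by rewrite sumr_const card_ord; field; rewrite pnatr_eq0 -lt0n.
Qed.

Lemma mean_avg_sqr_shortfall (T0 : (0 < T)%N) :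
  mean P avg_sqr_shortfall = (1 - dotv w mu) ^+ 2 + rho 0%N * qform Sig w.
Proof.
rewrite meanZ ?rpred_sum // => [|t _]; last by rewrite expr2 shortfall_mul_L1.
rewrite mean_sum => [|t]; last by rewrite expr2 shortfall_mul_L1.
under eq_bigr do rewrite expr2 mean_shortfall_mul /absdiff maxnn minnn subnn.
by rewrite sumr_const card_ord; field; rewrite pnatr_eq0 -lt0n.
Qed.

Lemma mean_sqr_avg_shortfall (T0 : (0 < T)%N) : mean P (avg_shortfall ^+ 2) = (1 - dotv w mu) ^+ 2 +
  qform Sig w * (\sum_(s < T) \sum_(t < T) rho (absdiff s t)) / T%:R ^+ 2.
Proof.
rewrite sqr_avg_shortfallE meanZ; last first.
  by apply: rpred_sum => s _; apply: rpred_sum => t _; exact: shortfall_mul_L1.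
rewrite mean_sum => [|s]; last by apply: rpred_sum => t _; exact: shortfall_mul_L1.
rewrite (eq_bigr (fun s : 'I_T => T%:R * (1 - dotv w mu) ^+ 2 +
    qform Sig w * \sum_(t < T) rho (absdiff s t))) => [|s _]; last first.
  rewrite mean_sum => [|t]; last exact: shortfall_mul_L1.
  under eq_bigr do rewrite mean_shortfall_mul mulrC.
  by rewrite big_split /= sumr_const card_ord mulr_sumr mulr_natl.
rewrite big_split /= sumr_const card_ord -mulr_sumr.
by field; rewrite pnatr_eq0 -lt0n.
Qed.

Lemma shortfallE t x : shortfall t x = 1 - \sum_(i < N) w i 0 * r t i x.
Proof.
rewrite /shortfall /port_return /= fct_sumE /=; congr (_ - _).
by apply: eq_bigr => i _; exact: mulrC.
Qed.

Lemma avg_growthE (T0 : (0 < T)%N) x : avg_growth w r x = (1 - avg_sqr_shortfall x) / 2.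
Proof.
rewrite /avg_growth /avg_sqr_shortfall /= fct_sumE /=.
under [in RHS]eq_bigr do rewrite exprfctE /= shortfallE.
rewrite [in RHS](eq_bigr (fun t => 1 - 2 * (\sum_(i < N) w i 0 * r t i x -
  (\sum_(i < N) w i 0 * r t i x) ^+ 2 / 2))) => [|t _]; last by field.
rewrite [in RHS]sumrB sumr_const card_ord -[in RHS]mulr_sumr.
by field; rewrite pnatr_eq0 -lt0n.
Qed.

Lemma prob_avg_growth_ge_G'_eps eps : (2 <= T)%N -> 0 < eps < 1 -> posdef Sig -> rho 0%N = 1 ->
  posdef (toeplitz T rho) ->
  Num.sqrt ((1 + (T%:R - 1) * rho_bar T rho) * eps / ((1 - eps) * T%:R))
    * sqrt_norm Sig w < 1 - dotv w mu ->
  ((1 - eps)%:E <= P [set x | (G'_eps T eps mu Sig rho w <= avg_growth w r x)%R])%E.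
Proof.
move=> T2 eps01 [_ Sig_pd] rho0 toep_pd; have [eps0 eps1] := andP eps01.
have T0 : (0 < T)%N by exact: leq_trans T2.
have Tpos : 0 < T%:R :> R by rewrite ltr0n.
set kappa := 1 + _ * _; set q := qform Sig w; set m := dotv w mu.
have Z_kappa : \sum_(s < T) \sum_(t < T) rho (absdiff s t) = T%:R * kappa.
  by rewrite sum_absdiff_rho_bar rho0 /kappa; ring.
have kappa0 : 0 < kappa by rewrite -(pmulr_rgt0 _ Tpos) -Z_kappa sum_absdiff_gt0.
have [w0 | w_neq0] := eqVneq w 0.
  have -> : [set x | (G'_eps T eps mu Sig rho w <= avg_growth w r x)%R] = setT.
    by apply/seteqP; split => x // _; rewrite /= w0 G'_eps_w0 avg_growth_w0.
  by rewrite probability_setT lee_fin gerBl ltW.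
have q0 : 0 < q by exact: Sig_pd.
rewrite (scaled_sqrt_normE w Sig T0 eps01 (ltW kappa0)) => ea.
rewrite (G'_epsE mu w Sig T0 eps01 (ltW kappa0)) -/kappa -/q -/m.
set v := kappa * q / T%:R.
have v0 : 0 < v by rewrite divr_gt0 ?mulr_gt0.
have EY2 : mean P (avg_shortfall ^+ 2) = (1 - m) ^+ 2 + v.
  by rewrite mean_sqr_avg_shortfall // -/m -/q Z_kappa /v; field; rewrite gt_eqF.
have EM : mean P avg_sqr_shortfall = (1 - m) ^+ 2 + v + (q - v).
  by rewrite mean_avg_sqr_shortfall // -/m -/q rho0; ring.
have := moment_tail_bound avg_shortfall_L1 sqr_avg_shortfall_L1 avg_sqr_shortfall_L1
  sqr_avg_shortfall_le (mean_avg_shortfall T0) EY2 EM v0 eps01 ea.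
set c := _ + _ / eps; have -> // : [set x | (1 - c) / 2 <= avg_growth w r x] =
  [set x | avg_sqr_shortfall x <= c].
by apply/seteqP; split => x /=; rewrite avg_growthE //; lra.
Qed.

End portfolio.

Theorem proposition5p2 (R : realType) (T N : nat) (eps : R)
    (mu : 'cV[R]_N) (Sig : 'M[R]_N) (rho : nat -> R) (w : 'cV[R]_N) :
  (2 <= T)%N -> (1 <= N)%N ->
  0 < eps < 1 ->
  posdef Sig ->
  rho 0%N = 1 ->
  posdef (toeplitz T rho) ->
  (forall i, 0 <= w i 0) ->
  Num.sqrt ((1 + (T%:R - 1) * rho_bar T rho) * eps / ((1 - eps) * T%:R))
    * sqrt_norm Sig w < 1 - dotv w mu ->
  ((G'_eps T eps mu Sig rho w)%:E <= G_eps T eps mu Sig rho w)%E.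
Proof.
move=> T2 _ eps01 Sig_pd rho0 toep_pd _ hyp.
apply: ereal_sup_ubound; exists (G'_eps T eps mu Sig rho w) => //.
move=> d Om P r r_L2 r_mean r_cov.
exact: prob_avg_growth_ge_G'_eps.
Qed.
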